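(* Let $V$ be a finite set and $\{\eta(t),t\ge0\}$ a consistent configuration process on $\Omega$. Then for all $\eta,\xi\in\Omega$ with $1\le|\xi|<|\eta|$ and all $t\ge0$, $$\mathbb E_\eta[F(\xi,\eta(t))]=\frac{1}{|\eta|-|\xi|}\sum_{i\in V}\eta_i\,\mathbb E_{\eta-\delta_i}[F(\xi,\eta(t))].$$
   Context: $\Lambda\subseteq\mathbb N_0$, $\Omega=\{\eta\in\Lambda^V:|\eta|<\infty\}$ with $|\eta|=\sum_x\eta_x$; $\delta_z$ is the configuration with one particle at $z$. $F(\xi,\eta):=\prod_{j\in V}\binom{\eta_j}{\xi_j}$ (with $\binom{a}{b}=0$ for $b>a$). A configuration process is a particle-number-conserving Markov process on $\Omega$ with generator $\mathcal L$; $\mathbb E_\eta$ is expectation started from $\eta$. It is consistent if $[\mathcal L,\mathcal A]=0$, where $\mathcal Af(\eta)=\sum_{x\in V}\eta_xf(\eta-\delta_x)$ (terms with $\eta_x=0$ vanish). *)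

From HB Require Import structures.
From mathcomp Require Import all_boot all_order all_algebra.
From mathcomp Require Import all_classical all_reals.
From mathcomp Require Import topology normedtype derive.
Import numFieldNormedType.Exports.
Set Implicit Arguments. Unset Strict Implicit. Unset Printing Implicit Defensive.
Import Order.TTheory GRing.Theory Num.Theory.
Local Open Scope ring_scope.

Definition Conf (V : finType) := {ffun V -> nat}.

Definition csize (V : finType) (eta : Conf V) : nat := (\sum_(x : V) eta x)%N.

(* eta in Omega = Lambda^V (finiteness of |eta| is automatic as V is finite) *)
Definition inOmega (V : finType) (Lam : pred nat) (eta : Conf V) : bool :=
  [forall x, Lam (eta x)].

(* eta - delta_z (truncated; only used when eta_z > 0 or with coefficient eta_z = 0) *)
Definition conf_sub (V : finType) (eta : Conf V) (z : V) : Conf V :=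
  [ffun x => (eta x - (x == z))%N].

Definition Fdual (V : finType) (xi eta : Conf V) : nat :=
  (\prod_(j : V) 'C(eta j, xi j))%N.

Definition conf_of (V : finType) (n : nat) (g : {ffun V -> 'I_n.+1}) : Conf V :=
  [ffun x => nat_of_ord (g x)].

(* sum of G over all configurations eta' with |eta'| = n (each counted once) *)
Definition level_sum (R : realType) (V : finType) (n : nat) (G : Conf V -> R) : R :=
  \sum_(g : {ffun V -> 'I_n.+1} | csize (conf_of g) == n) G (conf_of g).

Definition gen (R : realType) (V : finType) (c : Conf V -> Conf V -> R)
  (f : Conf V -> R) (eta : Conf V) : R :=
  level_sum (csize eta) (fun eta' => c eta eta' * (f eta' - f eta)).

Definition opA (R : realType) (V : finType) (f : Conf V -> R) (eta : Conf V) : R :=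
  \sum_(x : V) (eta x)%:R * f (conf_sub eta x).

(* Lambda is downward closed, so that eta - delta_x stays in Omega *)
Definition down_closed (Lam : pred nat) : Prop := forall n, Lam n.+1 -> Lam n.

(* Valid jump rates of a configuration process on Omega:
   nonnegative off-diagonal rates, no jumps leaving Omega.  (Conservation of the
   particle number is built into [gen], which only sums over the same level.) *)
Definition valid_rates (R : realType) (V : finType) (Lam : pred nat)
  (c : Conf V -> Conf V -> R) : Prop :=
  (forall eta eta', eta != eta' -> 0 <= c eta eta') /\
  (forall eta eta', inOmega Lam eta -> ~~ inOmega Lam eta' -> c eta eta' = 0).

(* P t eta eta' = P_eta(eta(t) = eta') is the transition function of the Markov
   process with generator [gen c]: the solution of Kolmogorov's backward equation
   d/dt P_t = L P_t with P_0 = Id (on each finite level this is P_t = exp(tL)). *)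
Definition transition_function (R : realType) (V : finType) (Lam : pred nat)
  (c : Conf V -> Conf V -> R) (P : R -> Conf V -> Conf V -> R) : Prop :=
  (forall eta eta', P 0 eta eta' = (eta == eta')%:R) /\
  (forall eta eta' (t : R), inOmega Lam eta ->
     is_derive (t : R^o) (1 : R^o) (fun s : R^o => (P s eta eta' : R^o)) (gen c (fun e => P t e eta') eta)).

Definition Expect (R : realType) (V : finType) (P : R -> Conf V -> Conf V -> R)
  (t : R) (eta : Conf V) (f : Conf V -> R) : R :=
  level_sum (csize eta) (fun eta' => P t eta eta' * f eta').

Definition consistent (R : realType) (V : finType) (Lam : pred nat)
  (c : Conf V -> Conf V -> R) : Prop :=
  forall (f : Conf V -> R) eta, inOmega Lam eta ->
    gen c (opA f) eta = opA (gen c f) eta.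

(* Consistency [L A = A L] makes u(t, e) = E_e[A f(eta(t))] and
   v(t, e) = (A E_.[f(eta(t))])(e) two solutions of the backward equation
   d/dt w = L w with the same initial value A f.  They coincide because, on the
   finite level of e, the energy sum (u - v)^2 obeys a linear Gronwall
   inequality.  For f = F(xi, .) one has A f = (|e| - |xi|) f, hence
   E_eta[A f] = (|eta| - |xi|) E_eta[f]. *)

From HB Require Import structures.
From mathcomp Require Import all_boot all_order all_algebra.
From mathcomp Require Import all_classical all_reals.
From mathcomp Require Import topology normedtype derive realfun sequences exp.
From mathcomp Require Import ring lra.
Import Order.TTheory GRing.Theory Num.Theory.
Import numFieldNormedType.Exports.
Local Open Scope ring_scope.

Set Implicit Arguments.
Unset Strict Implicit.

Lemma is_derive_sum_seq (R : numFieldType) (U W : normedModType R) (I : Type)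
    (r : seq I) (P : pred I) (F : I -> U -> W) (dF : I -> W) (x v : U) :
  (forall i, P i -> is_derive x v (F i) (dF i)) ->
  is_derive x v (fun y => \sum_(i <- r | P i) F i y) (\sum_(i <- r | P i) dF i).
Proof.
move=> dF_i; rewrite -fct_sumE.
elim/big_rec2: _ => [|i f df Pi]; first exact: is_derive_cst.
exact: is_deriveD (dF_i i Pi).
Qed.

Lemma gronwall_le0 (R : realType) (phi dphi : R -> R) (K : R) :
  (forall s : R, is_derive (s : R^o) 1 (phi : R^o -> R^o) (dphi s)) ->
  (forall s, dphi s <= K * phi s) -> phi 0 <= 0 ->
  forall t, 0 <= t -> phi t <= 0.
Proof.
move=> phi_der dphi_le phi0 t t0.
pose psi s := expR (- (K * s)) * phi s.
have psi_der s : is_derive (s : R^o) 1 (psi : R^o -> R^o)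
    (expR (- (K * s)) * (dphi s - K * phi s)).
  have exp_der : is_derive (s : R^o) 1 (fun u : R^o => expR (- (K * u)) : R^o)
      (expR (- (K * s)) * - K).
    have lin_der : is_derive (s : R^o) 1 (fun u : R^o => - (K * u) : R^o) (- K).
      by have := is_deriveN (is_deriveZ K (@is_derive_id _ R^o s 1));
        rewrite /GRing.scale /= mulr1.
    exact: (is_derive1_comp (is_derive_expR _) lin_der).
  apply: is_derive_eq (is_deriveM exp_der (phi_der s)) _.
  rewrite /GRing.scale /=; ring.
have psi_le : psi t <= psi 0.
  apply: (@ler0_derive1_le_cc _ psi 0 t) => //; rewrite ?in_itv /= ?lexx ?t0 //.
  - move=> x _; rewrite derive1E; case: (psi_der x) => _ ->.
    by rewrite mulr_ge0_le0 ?expR_ge0 // subr_le0.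
  - by apply: derivable_within_continuous => x _; case: (psi_der x).
rewrite -(pmulr_rle0 _ (expR_gt0 (- (K * t)))) (le_trans psi_le) //.
by rewrite /psi mulr0 oppr0 expR0 mul1r.
Qed.

Lemma le_cross_term (R : realDomainType) (a b k phi : R) :
  a ^+ 2 <= phi -> b ^+ 2 <= phi -> 2 * a * k * (b - a) <= 4 * `|k| * phi.
Proof.
move=> a2_le b2_le.
have cross_le : `|2 * a * (b - a)| <= 4 * phi.
  by rewrite ler_norml; apply/andP; split; nra.
have -> : 2 * a * k * (b - a) = k * (2 * a * (b - a)) by ring.
have -> : 4 * `|k| * phi = `|k| * (4 * phi) by ring.
by rewrite (le_trans (ler_norm _)) // normrM ler_wpM2l.
Qed.

Section Fdual.
Variable V : finType.

Lemma mul_Fdual_conf_sub (xi e : Conf V) x :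
  (e x * Fdual xi (conf_sub e x) = (e x - xi x) * Fdual xi e)%N.
Proof.
rewrite /Fdual (bigD1 x) //= [in RHS](bigD1 x) //= ffunE eqxx subn1.
rewrite mulnA mul_bin_down -mulnA; congr (_ * (_ * _))%N.
by apply: eq_bigr => j /negbTE jx; rewrite ffunE jx subn0.
Qed.

Lemma sum_mul_Fdual_conf_sub (xi e : Conf V) :
  (\sum_x e x * Fdual xi (conf_sub e x) = (csize e - csize xi) * Fdual xi e)%N.
Proof.
under eq_bigr do rewrite mul_Fdual_conf_sub.
rewrite -big_distrl /=.
have [/forallP xi_le_e | /forallPn [x xi_gt_e]] := boolP [forall x, xi x <= e x]%N.
  by rewrite /csize sumnB.
suff -> : Fdual xi e = 0%N by rewrite !muln0.
by rewrite /Fdual (bigD1 x) //= bin_small ?mul0n // ltnNge.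
Qed.

Lemma opA_Fdual (R : realType) (xi e : Conf V) :
  opA (fun z => (Fdual xi z)%:R : R) e = (csize e - csize xi)%N%:R * (Fdual xi e)%:R.
Proof.
by rewrite /opA -natrM -sum_mul_Fdual_conf_sub natr_sum; under eq_bigr do rewrite natrM.
Qed.

End Fdual.

Section LevelSum.
Variable V : finType.

Definition ord_conf n (e : Conf V) : {ffun V -> 'I_n.+1} := [ffun x => inord (e x)].

Lemma conf_le_csize (e : Conf V) x : (e x <= csize e)%N.
Proof. by rewrite /csize (bigD1 x) //= leq_addr. Qed.

Lemma ord_confK n (e : Conf V) : csize e = n -> conf_of (ord_conf n e) = e.
Proof.
by move=> <-; apply/ffunP => x; rewrite !ffunE inordK // ltnS conf_le_csize.
Qed.

Lemma conf_of_inj n : injective (@conf_of V n).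
Proof.
move=> g h /ffunP gh; apply/ffunP => x; apply/val_inj.
by have := gh x; rewrite !ffunE.
Qed.

Lemma level_sum_delta (R : realType) n (f : Conf V -> R) (e : Conf V) :
  csize e = n -> level_sum n (fun e' => (e == e')%:R * f e') = f e.
Proof.
move=> e_n; rewrite /level_sum (bigD1 (ord_conf n e)) /=; last by rewrite ord_confK ?e_n.
rewrite ord_confK // eqxx mul1r big1 ?addr0 // => g /andP[_ g_neq].
have [e_g|] := eqVneq e (conf_of g); last by rewrite mul0r.
suff g_e : g = ord_conf n e by rewrite g_e eqxx in g_neq.
by apply: (@conf_of_inj n); rewrite ord_confK.
Qed.

End LevelSum.

Section Backward.
Variables (R : realType) (V : finType) (Lam : pred nat).
Variables (c : Conf V -> Conf V -> R) (P : R -> Conf V -> Conf V -> R).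

Lemma genB (f g : Conf V -> R) e :
  gen c (fun z => f z - g z) e = gen c f e - gen c g e.
Proof. by rewrite /gen /level_sum -sumrB; apply: eq_bigr => h _; ring. Qed.

Lemma level_sum_gen_mulr (f : Conf V -> R) t e :
  level_sum (csize e) (fun y => gen c (fun z => P t z y) e * f y)
  = gen c (fun z => Expect P t z f) e.
Proof.
rewrite /gen /Expect /level_sum.
under eq_bigr do rewrite mulr_suml.
rewrite exchange_big; apply: eq_bigr => z /eqP ->.
by rewrite -sumrB mulr_sumr; apply: eq_bigr => y _; ring.
Qed.

Hypothesis P_tf : transition_function Lam c P.

Lemma Expect_at0 f e : Expect P 0 e f = f e.
Proof.
rewrite -(level_sum_delta f (erefl (csize e))) /Expect.
by apply: eq_bigr => g _; rewrite P_tf.1.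
Qed.

Lemma is_derive_Expect f e t : inOmega Lam e ->
  is_derive (t : R^o) 1 (fun s : R^o => Expect P s e f : R^o)
    (gen c (fun z => Expect P t z f) e).
Proof.
move=> eO; rewrite -level_sum_gen_mulr.
apply: is_derive_sum_seq => g _.
apply: is_derive_eq (is_deriveM (P_tf.2 _ (conf_of g) t eO) (is_derive_cst _ _ _)) _.
by rewrite /GRing.scale /= mulr0 add0r mulrC.
Qed.

End Backward.

Section Uniqueness.
Variables (R : realType) (V : finType) (Lam : pred nat) (c : Conf V -> Conf V -> R).
Hypothesis c_closed :
  forall e e', inOmega Lam e -> ~~ inOmega Lam e' -> c e e' = 0.

Definition omega_level n : pred {ffun V -> 'I_n.+1} :=
  fun g => (csize (conf_of g) == n) && inOmega Lam (conf_of g).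

Lemma gen_omega_level n (f : Conf V -> R) (g : {ffun V -> 'I_n.+1}) :
  omega_level g ->
  gen c f (conf_of g) =
  \sum_(h : {ffun V -> 'I_n.+1} | omega_level h)
     c (conf_of g) (conf_of h) * (f (conf_of h) - f (conf_of g)).
Proof.
move=> /andP[/eqP g_n gO]; rewrite /gen g_n /level_sum.
rewrite (bigID (fun h => inOmega Lam (conf_of h))) /= [X in _ + X]big1 ?addr0 //.
by move=> h /andP[_ hO]; rewrite c_closed ?mul0r.
Qed.

Lemma backward_eq_uniq (D : R -> Conf V -> R) :
  (forall e t, inOmega Lam e ->
     is_derive (t : R^o) 1 (fun s : R^o => D s e : R^o) (gen c (D t) e)) ->
  (forall e, inOmega Lam e -> D 0 e = 0) ->
  forall t e, 0 <= t -> inOmega Lam e -> D t e = 0.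
Proof.
move=> D_der D0 t e t0 eO.
pose Q := @omega_level (csize e).
pose phi s := \sum_(g | Q g) D s (conf_of g) ^+ 2.
pose dphi s := \sum_(g | Q g) 2 * D s (conf_of g) * gen c (D s) (conf_of g).
pose K := 4 * \sum_(g | Q g) \sum_(h | Q h) `|c (conf_of g) (conf_of h)|.
have sqr_le_phi s g : Q g -> D s (conf_of g) ^+ 2 <= phi s.
  move=> Qg; rewrite /phi (bigD1 g) //= lerDl.
  by apply: sumr_ge0 => h _; rewrite sqr_ge0.
have phi_der s : is_derive (s : R^o) 1 (phi : R^o -> R^o) (dphi s).
  apply: is_derive_sum_seq => g /andP[_ gO].
  apply: is_derive_eq (is_deriveM (D_der _ s gO) (D_der _ s gO)) _.
  by rewrite /GRing.scale /=; ring.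
have dphi_le s : dphi s <= K * phi s.
  rewrite /dphi /K -mulrA mulr_suml mulr_sumr; apply: ler_sum => g Qg.
  rewrite gen_omega_level // mulr_sumr mulr_suml mulr_sumr; apply: ler_sum => h Qh.
  rewrite !mulrA.
  exact: le_cross_term (sqr_le_phi s g Qg) (sqr_le_phi s h Qh).
have phi0 : phi 0 <= 0.
  by rewrite /phi big1 // => g /andP[_ gO]; rewrite D0 // expr0n.
have Qe : Q (ord_conf (csize e) e) by rewrite /Q /omega_level ord_confK ?eqxx.
have := le_trans (sqr_le_phi t _ Qe) (gronwall_le0 phi_der dphi_le phi0 t0).
rewrite ord_confK // => sqr_le0.
by apply/eqP; rewrite -sqrf_eq0 eq_le sqr_le0 sqr_ge0.
Qed.

End Uniqueness.

Lemma inOmega_conf_sub (V : finType) (Lam : pred nat) (e : Conf V) x :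
  down_closed Lam -> inOmega Lam e -> inOmega Lam (conf_sub e x).
Proof.
move=> Lam_down /forallP eO; apply/forallP => y; rewrite ffunE.
have [_ | _] := eqVneq y x; last by rewrite subn0.
by have := eO y; case: (e y) => [|k] //= /Lam_down; rewrite subn1.
Qed.

Section Duality.
Variables (R : realType) (V : finType) (Lam : pred nat).
Variables (c : Conf V -> Conf V -> R) (P : R -> Conf V -> Conf V -> R).
Hypotheses (Lam_down : down_closed Lam) (c_valid : valid_rates Lam c).
Hypotheses (P_tf : transition_function Lam c P) (c_consistent : consistent Lam c).

Lemma Expect_opA f t e : 0 <= t -> inOmega Lam e ->
  Expect P t e (opA f) = opA (fun z => Expect P t z f) e.
Proof.
move=> t0 eO; apply/eqP; rewrite -subr_eq0; apply/eqP; move: t e t0 eO.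
apply: (backward_eq_uniq c_valid.2) => [e s eO | e _].
  have opA_der : is_derive (s : R^o) 1
      (fun r : R^o => opA (fun z => Expect P r z f) e : R^o)
      (gen c (opA (fun z => Expect P s z f)) e).
    rewrite c_consistent // /opA; apply: is_derive_sum_seq => x _.
    have eO_x := inOmega_conf_sub x Lam_down eO.
    by have := is_deriveZ (e x)%:R (is_derive_Expect P_tf f s eO_x).
  by rewrite genB; exact: is_deriveB (is_derive_Expect P_tf _ s eO) opA_der.
apply/eqP; rewrite (Expect_at0 P_tf) subr_eq0; apply/eqP.
by apply: eq_bigr => x _; rewrite (Expect_at0 P_tf).
Qed.

Lemma Expect_opA_Fdual (xi : Conf V) t e :
  Expect P t e (opA (fun z => (Fdual xi z)%:R)) =
  (csize e - csize xi)%N%:R * Expect P t e (fun z => (Fdual xi z)%:R).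
Proof.
rewrite /Expect /level_sum mulr_sumr; apply: eq_bigr => g /eqP g_e.
by rewrite opA_Fdual g_e mulrCA.
Qed.

End Duality.

Theorem proposition3p6 (R : realType) (V : finType) (Lam : pred nat)
  (c : Conf V -> Conf V -> R) (P : R -> Conf V -> Conf V -> R) :
  down_closed Lam ->
  valid_rates Lam c ->
  transition_function Lam c P ->
  consistent Lam c ->
  forall (eta xi : Conf V) (t : R),
    inOmega Lam eta -> inOmega Lam xi ->
    (1 <= csize xi)%N -> (csize xi < csize eta)%N -> 0 <= t ->
    Expect P t eta (fun e => (Fdual xi e)%:R)
    = ((csize eta - csize xi)%N%:R)^-1 *
      \sum_(i : V) (eta i)%:R * Expect P t (conf_sub eta i) (fun e => (Fdual xi e)%:R).
Proof.
move=> Lam_down c_valid P_tf c_consistent eta xi t etaO _ _ xi_lt_eta t0.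
have := Expect_opA Lam_down c_valid P_tf c_consistent (fun e => (Fdual xi e)%:R) t0 etaO.
rewrite Expect_opA_Fdual /opA => <-.
by rewrite mulKf // pnatr_eq0 subn_eq0 -ltnNge.
Qed.
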